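(* Let $\eta,\lambda>0$ with $\eta\lambda\le\tfrac12$, $T\ge1$, $\delta\in(0,1)$, assume $\frac{\underline\sigma^2}{M^2}\ge3e^{4\eta\lambda}\sqrt{\lambda\eta\ln\frac{2T^2}{\delta}}$, and let $x(t)$ be the SGD+WD iterates from $x(0)\neq0$. On the event $\mathcal E_T$, for every $0\le t\le T$, $$\eta^{-2}\|x(t)\|_2^4\ge\frac{1-\eta\lambda}{2\eta\lambda}\big(1-e^{-4t\eta\lambda(1-\eta\lambda)}\big)\underline\sigma^2-\frac12(1-\eta\lambda)^2M^2e^{4\eta\lambda}\sqrt{\frac{1}{\lambda\eta}\ln\frac{2T^2}{\delta}}.$$ If in addition $\frac{\underline\sigma^2}{12\eta\lambda}\ge\frac{M^2}{2}e^{4\eta\lambda}\sqrt{\frac{1}{\lambda\eta}\ln\frac{2T^2}{\delta}}$, then on $\mathcal E_T$, for every $t$ with $\frac{1}{\eta\lambda}\le t\le T$, $$\eta^{-2}\|x(t)\|_2^4\ge\frac{(1-\eta\lambda)^2\underline\sigma^2}{4\eta\lambda}.$$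
   Context: Let $\Gamma$ be an index set with probability distribution $\mathcal D$; each $L_\gamma:\mathbb{R}^d\setminus\{0\}\to\mathbb{R}$ is differentiable and scale invariant ($L_\gamma(cx)=L_\gamma(x)$ for $c>0$); $M:=\sup_{\gamma}\max_{\|x\|_2=1}\|\nabla L_\gamma(x)\|_2<\infty$; $\underline\sigma>0$ satisfies $\underline\sigma^2\le\mathbb{E}_\gamma\|\nabla L_\gamma(x)\|_2^2$ for all $\|x\|_2=1$. SGD+WD: $x(t+1)=(1-\eta\lambda)x(t)-\eta\nabla L_{\gamma_t}(x(t))$ with $\gamma_t$ i.i.d. $\sim\mathcal D$; $\bar x:=x/\|x\|_2$. $\mathcal E_T$ is the event that for all $0\le t'\le t\le T-1$, $$\Big|\sum_{\tau=t'}^t(1-\eta\lambda)^{4(t-\tau)}\Big(\|\nabla L_{\gamma_\tau}(\bar x(\tau))\|_2^2-\mathbb{E}\big[\|\nabla L_{\gamma_\tau}(\bar x(\tau))\|_2^2\,\big|\,\bar x(\tau)\big]\Big)\Big|\le e^{4\eta\lambda}\frac{M^2}{4}\sqrt{\frac{1}{\lambda\eta}\ln\frac{2T^2}{\delta}}.$$ *)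

From HB Require Import structures.
From mathcomp Require Import all_boot all_order all_algebra.
From mathcomp Require Import all_classical all_reals all_analysis.
Set Implicit Arguments. Unset Strict Implicit. Unset Printing Implicit Defensive.
Import Order.TTheory GRing.Theory Num.Theory.
Import numFieldNormedType.Exports.
Local Open Scope ring_scope.
Local Open Scope classical_set_scope.

Section Defs.
Variables (R : realType) (d : nat).

Definition l2norm (x : 'rV[R]_d) : R := Num.sqrt (\sum_(i < d) x ord0 i ^+ 2).

Definition basis_vec (i : 'I_d) : 'rV[R]_d := delta_mx ord0 i.

Definition grad (f : 'rV[R]_d -> R) (x : 'rV[R]_d) : 'rV[R]_d :=
  \row_i ('D_(basis_vec i) f x).

Definition normalize (x : 'rV[R]_d) : 'rV[R]_d := (l2norm x)^-1 *: x.

(* M := sup_gamma sup_{||x||_2 = 1} ||grad L_gamma (x)||_2 : the set whose sup is taken *)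
Definition gradnorm_sphere {G : Type} (L : G -> 'rV[R]_d -> R) : set R :=
  [set r | exists g x, l2norm x = 1 /\ r = l2norm (grad (L g) x)].

Fixpoint sgd_wd {G : Type} (L : G -> 'rV[R]_d -> R) (eta lam : R)
    (gam : nat -> G) (x0 : 'rV[R]_d) (t : nat) : 'rV[R]_d :=
  match t with
  | O => x0
  | S t' => let xt := sgd_wd L eta lam gam x0 t' in
            (1 - eta * lam) *: xt - eta *: grad (L (gam t')) xt
  end.

End Defs.

From HB Require Import structures.
From mathcomp Require Import all_boot all_order all_algebra.
From mathcomp Require Import all_classical all_reals all_analysis.
From mathcomp Require Import ring lra measurable_realfun.
Import Order.TTheory GRing.Theory Num.Theory.
Import numFieldNormedType.Exports.
Local Open Scope ring_scope.
Local Open Scope classical_set_scope.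
Set Implicit Arguments. Unset Strict Implicit. Unset Printing Implicit Defensive.

(* Scale invariance of each [L g] makes [grad (L g) x] orthogonal to [x] and equal to
   [grad (L g) (x / |x|) / |x|].  One step of SGD with weight decay therefore gives
     |x(t+1)|^2 = (1 - eta lam)^2 |x(t)|^2 + eta^2 G_t / |x(t)|^2
   with G_t the squared gradient norm at the normalized iterate, and squaring yields
     |x(t+1)|^4 >= (1 - eta lam)^4 |x(t)|^4 + 2 (1 - eta lam)^2 eta^2 G_t,
   so |x(t+1)|^4 dominates 2 (1 - eta lam)^2 eta^2 times the sum of the G_tau discounted
   by (1 - eta lam)^4.  On E_T that sum is at least sig^2 times the geometric sum of the
   weights minus the deviation bound, and 1 - u <= exp (- u) compares the geometric sum
   with the exponential of the statement.  For t >= 1 / (eta lam) this exponential is at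
   most exp (-2) <= 1/4, which gives the second estimate. *)

Section Euclidean.
Variables (R : realType) (d : nat).
Implicit Types (x y : 'rV[R]_d) (a b c : R).

Definition dotp x y : R := \sum_(i < d) x ord0 i * y ord0 i.

Lemma l2norm_ge0 x : 0 <= l2norm x.
Proof. exact: sqrtr_ge0. Qed.

Lemma sqr_l2norm x : l2norm x ^+ 2 = dotp x x.
Proof.
rewrite /l2norm sqr_sqrtr; last by apply: sumr_ge0 => i _; exact: sqr_ge0.
by apply: eq_bigr => i _; rewrite expr2.
Qed.

Lemma l2norm0 : l2norm (0 : 'rV[R]_d) = 0.
Proof. by rewrite /l2norm big1 ?sqrtr0 // => i _; rewrite mxE expr0n. Qed.

Lemma l2normZ c x : l2norm (c *: x) = `|c| * l2norm x.
Proof.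
rewrite /l2norm -sqrtr_sqr -sqrtrM ?sqr_ge0 // mulr_sumr; congr Num.sqrt.
by apply: eq_bigr => i _; rewrite mxE exprMn.
Qed.

Lemma l2norm_gt0 x : x != 0 -> 0 < l2norm x.
Proof.
move=> x0; rewrite sqrtr_gt0 lt_neqAle sumr_ge0 ?andbT => [|i _]; last exact: sqr_ge0.
apply: contra x0; rewrite eq_sym psumr_eq0 => [/allP x0|i _]; last exact: sqr_ge0.
apply/eqP/rowP => i; rewrite mxE; apply/eqP.
by rewrite -sqrf_eq0; apply: x0; exact: mem_index_enum.
Qed.

Lemma sqr_l2normB a b x y :
  l2norm (a *: x - b *: y) ^+ 2 =
  a ^+ 2 * l2norm x ^+ 2 - 2 * a * b * dotp x y + b ^+ 2 * l2norm y ^+ 2.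
Proof.
rewrite !sqr_l2norm /dotp !mulr_sumr -sumrB -big_split /=.
by apply: eq_bigr => i _; rewrite !mxE; ring.
Qed.

Lemma l2norm_normalize x : x != 0 -> l2norm (normalize x) = 1.
Proof.
move=> x0; rewrite /normalize l2normZ ger0_norm ?invr_ge0 ?l2norm_ge0 //.
by rewrite mulVf // gt_eqF ?l2norm_gt0.
Qed.

Lemma normalize_neq0 x : x != 0 -> normalize x != 0.
Proof.
by move=> x0; apply: contra_neq (oner_neq0 R) => x0'; rewrite -(l2norm_normalize x0) x0' l2norm0.
Qed.

Lemma normalizeK x : x != 0 -> l2norm x *: normalize x = x.
Proof.
by move=> x0; rewrite /normalize scalerA mulfV ?scale1r // gt_eqF ?l2norm_gt0.
Qed.

End Euclidean.

Section ScaleInvariant.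
Variables (R : realType) (d : nat) (f : 'rV[R]_d -> R).
Implicit Types (x v : 'rV[R]_d).
Hypothesis f_scale : forall x (c : R), x != 0 -> 0 < c -> f (c *: x) = f x.

Let f_scaleT x (c : R) : 0 < c -> f (c *: x) = f x.
Proof. by have [->|x0] := eqVneq x 0; [rewrite scaler0 | exact: f_scale]. Qed.

Lemma derive_scale x (c : R) v : 0 < c -> 'D_v f (c *: x) = 'D_(c^-1 *: v) f x.
Proof.
move=> c0; rewrite /derive.
suff -> : (fun h : R => h^-1 *: ((f \o shift (c *: x)) (h *: v) - f (c *: x))) =
  (fun h => h^-1 *: ((f \o shift x) (h *: (c^-1 *: v)) - f x)) by [].
apply/funext => h /=; congr (_ *: (_ - _)); last exact: f_scaleT.
rewrite -(f_scaleT (h *: (c^-1 *: v) + x) c0) /shift /=; congr f.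
by rewrite scalerDr !scalerA mulrAC mulfV ?gt_eqF // mul1r.
Qed.

Lemma grad_scale x (c : R) : differentiable f x -> 0 < c ->
  grad f (c *: x) = c^-1 *: grad f x.
Proof.
move=> df c0; apply/rowP => i; rewrite !mxE derive_scale // !deriveE //.
by rewrite linearZ.
Qed.

Lemma derive_radial x : 'D_x f x = 0.
Proof.
rewrite /derive; apply: cvg_lim => //; apply: cvg_near_cst.
near=> h => /=.
rewrite -{2}(scale1r x) -scalerDl f_scaleT ?subrr ?scaler0 //.
near: h; exists 1 => //= h; rewrite /ball /= sub0r normrN => h1 _.
have : -1 < h by move: h1; rewrite ltr_norml => /andP[].
lra.
Unshelve. all: by end_near.
Qed.

Lemma dotp_grad x : differentiable f x -> dotp x (grad f x) = 0.
Proof.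
move=> df; rewrite -(derive_radial x) deriveE //.
have -> : 'd f x x = 'd f x (\sum_(j < d) x 0 j *: delta_mx 0 j) by rewrite -row_sum_delta.
rewrite linear_sum; apply: eq_bigr => i _.
by rewrite mxE linearZ /= deriveE.
Qed.

Lemma sqr_l2norm_gradient_step (a eta : R) x :
  (forall y, y != 0 -> differentiable f y) -> x != 0 ->
  l2norm (a *: x - eta *: grad f x) ^+ 2 =
  a ^+ 2 * l2norm x ^+ 2 + eta ^+ 2 * l2norm (grad f (normalize x)) ^+ 2 / l2norm x ^+ 2.
Proof.
move=> f_diff x0; have nx0 : l2norm x != 0 by rewrite gt_eqF ?l2norm_gt0.
have gradx : grad f x = (l2norm x)^-1 *: grad f (normalize x).
  rewrite -{1}(normalizeK x0) grad_scale ?l2norm_gt0 //.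
  exact/f_diff/normalize_neq0.
have /dotp_grad dx0 := f_diff _ x0.
rewrite sqr_l2normB dx0 mulr0 subr0 gradx l2normZ.
by rewrite ger0_norm ?invr_ge0 ?l2norm_ge0 //; field.
Qed.
End ScaleInvariant.

Section DiscountedSum.
Variable R : realType.
Implicit Types (q c : R) (f g u v : nat -> R).

Definition dsum q f t : R := \sum_(0 <= tau < t.+1) q ^+ (t - tau) * f tau.

Lemma dsum0 q f : dsum q f 0 = f 0.
Proof. by rewrite /dsum big_nat1 expr0 mul1r. Qed.

Lemma dsumS q f t : dsum q f t.+1 = q * dsum q f t + f t.+1.
Proof.
rewrite /dsum big_nat_recr //= subnn expr0 mul1r big_distrr /=; congr (_ + _).
by apply: eq_big_nat => i /andP[_ ti]; rewrite subSn // exprS mulrA.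
Qed.

Lemma dsumZ q c f t : dsum q (fun i => c * f i) t = c * dsum q f t.
Proof. by rewrite /dsum mulr_sumr; apply: eq_bigr => i _; rewrite mulrCA. Qed.

Lemma dsumB q f g t : dsum q (fun i => f i - g i) t = dsum q f t - dsum q g t.
Proof. by rewrite /dsum -sumrB; apply: eq_bigr => i _; rewrite mulrBr. Qed.

Lemma ler_dsum q f g t : 0 <= q -> (forall i, f i <= g i) -> dsum q f t <= dsum q g t.
Proof. by move=> q0 fg; apply: ler_sum => i _; rewrite ler_wpM2l ?exprn_ge0. Qed.

Lemma dsum_geom q t : (1 - q) * dsum q (fun=> 1) t = 1 - q ^+ t.+1.
Proof.
elim: t => [|t IH]; first by rewrite dsum0 mulr1 expr1.
by rewrite dsumS mulrDr mulrCA IH !exprS; ring.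
Qed.

Lemma dsum_le_rec q u v t : 0 <= q -> 0 <= u 0 ->
  (forall s, q * u s + v s <= u s.+1) -> dsum q v t <= u t.+1.
Proof.
move=> q0 u0 uv; elim: t => [|t IH].
  by rewrite dsum0; apply: le_trans (uv 0%N); rewrite lerDr mulr_ge0.
by rewrite dsumS; apply: le_trans (uv t.+1); rewrite lerD2r ler_wpM2l.
Qed.

End DiscountedSum.

Section ExponentialBounds.
Variable R : realType.
Implicit Types (a u : R).

Lemma expr1B_le_expR a n : a <= 1 -> (1 - a) ^+ n <= expR (- (n%:R * a)).
Proof.
move=> a1; rewrite -mulrN expRM_natl lerXn2r ?nnegrE ?expR_ge0 ?subr_ge0 //.
exact: expR_ge1Dx.
Qed.

Lemma dsum_geom_ge a t : 0 < a -> a <= 2^-1 ->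
  1 - expR (- (4 * t.+1%:R * a * (1 - a))) <= 4 * a * (1 - a) * dsum ((1 - a) ^+ 4) (fun=> 1) t.
Proof.
move=> a0 a1; set S := dsum _ _ t.
have S0 : 0 <= S by apply: sumr_ge0 => i _; rewrite mulr1 !exprn_ge0 // subr_ge0; lra.
have geom := dsum_geom ((1 - a) ^+ 4) t; rewrite -/S -exprM in geom.
have hp : (1 - a) ^+ (4 * t.+1) <= expR (- (4 * t.+1%:R * a * (1 - a))).
  apply: le_trans (expr1B_le_expR _ _) _; first lra.
  rewrite ler_expR natrM; have : 0 <= t.+1%:R :> R := ler0n _ _; nra.
have hq : 1 - (1 - a) ^+ 4 <= 4 * a * (1 - a).
  have -> : 1 - (1 - a) ^+ 4 = 4 * a * (1 - a) - a ^+ 2 * (2 - 4 * a + a ^+ 2) by ring.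
  rewrite lerBlDr lerDl; apply: mulr_ge0; [exact: sqr_ge0 | nra].
have := ler_wpM2r S0 hq; lra.
Qed.

Lemma expRN_le_inv4 u : 2 <= u -> expR (- u) <= 4^-1.
Proof.
move=> u2; have e2 : 4 <= expR 2 :> R.
  have -> : (2 : R) = 2%:R * 1 by rewrite mulr1.
  rewrite expRM_natl; have := expR_ge1Dx (1 : R); nra.
by rewrite expRN lef_pV2 ?posrE ?expR_gt0 //; apply: le_trans e2 _; rewrite ler_expR.
Qed.

End ExponentialBounds.

Lemma fine_integral_ge (R : realType) (dG : measure_display) (Gam : measurableType dG)
    (D : probability Gam R) (h : Gam -> R) (M s : R) :
  measurable_fun setT h -> (forall g, 0 <= h g <= M) ->
  (s%:E <= \int[D]_g (h g)%:E)%E -> s <= fine (\int[D]_g (h g)%:E).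
Proof.
move=> mh hb hs.
have h0 g : 0 <= h g by case/andP: (hb g).
have : (\int[D]_g (h g)%:E <= M%:E)%E.
  apply: (@le_trans _ _ (\int[D]_g (cst M%:E g))%E).
    apply: ge0_le_integral => //.
    - by move=> g _; rewrite lee_fin.
    - exact/measurable_EFinP.
    - by move=> g _; rewrite lee_fin; case/andP: (hb g).
  rewrite integral_cst //; set DT := (X in (_ * X)%E).
  have -> : DT = 1%E by exact: probability_setT.
  by rewrite mule1.
by move: hs; case: (\int[D]_g (h g)%:E)%E.
Qed.

Section SGDWeightDecay.
Variables (R : realType) (d : nat) (I : Type) (L : I -> 'rV[R]_d -> R).
Hypothesis L_diff : forall g x, x != 0 -> differentiable (L g) x.
Hypothesis L_scale : forall g x (c : R), x != 0 -> 0 < c -> L g (c *: x) = L g x.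
Variables (eta lam : R) (gam : nat -> I) (x0 : 'rV[R]_d).
Hypotheses (etalam_neq1 : eta * lam != 1) (x0_neq0 : x0 != 0).

Local Notation x := (sgd_wd L eta lam gam x0).
Local Notation gsq t := (l2norm (grad (L (gam t)) (normalize (x t))) ^+ 2).

Lemma sqr_l2norm_sgd_wdS t : x t != 0 ->
  l2norm (x t.+1) ^+ 2 =
  (1 - eta * lam) ^+ 2 * l2norm (x t) ^+ 2 + eta ^+ 2 * gsq t / l2norm (x t) ^+ 2.
Proof. exact: sqr_l2norm_gradient_step (L_scale (gam t)) _ _ _ (L_diff (gam t)). Qed.

Lemma sgd_wd_neq0 t : x t != 0.
Proof.
elim: t => // t xt0.
have : 0 < l2norm (x t.+1) ^+ 2.
  rewrite sqr_l2norm_sgd_wdS //; apply: ltr_wpDr.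
    by rewrite divr_ge0 ?sqr_ge0 // mulr_ge0 ?sqr_ge0.
  apply: mulr_gt0; last exact: exprn_gt0 (l2norm_gt0 xt0).
  by rewrite exprn_even_gt0 //= subr_eq0 eq_sym.
by move=> pos; apply/eqP => xt; move: pos; rewrite xt l2norm0 expr0n ltxx.
Qed.

(* Square the recursion for [|x t|^2] and drop the square of the gradient term:
   the cross term no longer depends on [|x t|]. *)
Lemma l2norm4_sgd_wdS t :
  (1 - eta * lam) ^+ 4 * l2norm (x t) ^+ 4 + 2 * (1 - eta * lam) ^+ 2 * eta ^+ 2 * gsq t
  <= l2norm (x t.+1) ^+ 4.
Proof.
have xt0 : l2norm (x t) ^+ 2 != 0 by rewrite sqrf_eq0 gt_eqF ?l2norm_gt0 ?sgd_wd_neq0.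
rewrite -[4%N]/(2 * 2)%N !exprM sqr_l2norm_sgd_wdS ?sgd_wd_neq0 //.
set N := l2norm (x t) ^+ 2; set c := eta ^+ 2 * gsq t / N.
have -> : ((1 - eta * lam) ^+ 2 * N + c) ^+ 2 =
    (1 - eta * lam) ^+ 2 ^+ 2 * N ^+ 2 + 2 * (1 - eta * lam) ^+ 2 * eta ^+ 2 * gsq t + c ^+ 2.
  by rewrite /c; field.
by rewrite lerDl sqr_ge0.
Qed.

Lemma l2norm4_sgd_wd_ge_dsum t :
  2 * (1 - eta * lam) ^+ 2 * eta ^+ 2 * dsum ((1 - eta * lam) ^+ 4) (fun s => gsq s) t
  <= l2norm (x t.+1) ^+ 4.
Proof.
rewrite -dsumZ; apply: (dsum_le_rec (u := fun s => l2norm (x s) ^+ 4)).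
- exact: exprn_even_ge0.
- exact: exprn_ge0 (l2norm_ge0 _).
- exact: l2norm4_sgd_wdS.
Qed.

End SGDWeightDecay.

Section SGDWeightDecayConcentration.
Variables (R : realType) (d : nat) (dG : measure_display) (Gam : measurableType dG).
Variables (D : probability Gam R) (L : Gam -> 'rV[R]_d -> R).
Hypothesis L_diff : forall g x, x != 0 -> differentiable (L g) x.
Hypothesis L_scale : forall g x (c : R), x != 0 -> 0 < c -> L g (c *: x) = L g x.
Hypothesis L_meas : forall x, measurable_fun setT (fun g => l2norm (grad (L g) x) ^+ 2).
Hypothesis M_fin : has_ubound (gradnorm_sphere L).
Variable sig : R.
Hypothesis sig_le : forall x, l2norm x = 1 ->
  ((sig ^+ 2)%:E <= \int[D]_g ((l2norm (grad (L g) x) ^+ 2)%:E))%E.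
Variables (eta lam : R).
Hypotheses (eta_pos : 0 < eta) (lam_pos : 0 < lam) (etalam_le : eta * lam <= 2^-1).
Variables (T : nat) (gam : nat -> Gam) (x0 : 'rV[R]_d) (B : R).
Hypothesis x0_neq0 : x0 != 0.

Local Notation M := (sup (gradnorm_sphere L)).
Local Notation Ex y := (fine (\int[D]_g ((l2norm (grad (L g) y) ^+ 2)%:E))).
Local Notation x := (sgd_wd L eta lam gam x0).
Local Notation gsq t := (l2norm (grad (L (gam t)) (normalize (x t))) ^+ 2).

Hypothesis deviation_le : forall t, (t <= T.-1)%N ->
  `| \sum_(0 <= tau < t.+1) (1 - eta * lam) ^+ (4 * (t - tau)) *
       (gsq tau - Ex (normalize (x tau))) | <= B.

Let etalam_gt0 : 0 < eta * lam. Proof. exact: mulr_gt0. Qed.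
Let etalam_neq1 : eta * lam != 1.
Proof. by apply/negP => /eqP e1; move: etalam_le; rewrite e1; lra. Qed.

Lemma l2norm_grad_le_sup g y : l2norm y = 1 -> l2norm (grad (L g) y) <= M.
Proof.
move=> y1; apply: sup_upper_bound; last by exists g, y.
by split => //; exists (l2norm (grad (L g) y)), g, y.
Qed.

Lemma sqr_sig_le_Ex y : l2norm y = 1 -> sig ^+ 2 <= Ex y.
Proof.
move=> y1; apply: (@fine_integral_ge _ _ _ D _ (M ^+ 2)); [exact: L_meas | | exact: sig_le].
move=> g; rewrite sqr_ge0 lerXn2r ?nnegrE ?l2norm_ge0 ?l2norm_grad_le_sup //.
exact: le_trans (l2norm_ge0 _) (l2norm_grad_le_sup g y1).
Qed.

Lemma dsum_gsq_ge t : (t <= T.-1)%N ->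
  sig ^+ 2 * dsum ((1 - eta * lam) ^+ 4) (fun=> 1) t - B
  <= dsum ((1 - eta * lam) ^+ 4) (fun s => gsq s) t.
Proof.
move=> tT; have := deviation_le tT.
rewrite (_ : \sum_(_ <= _ < _) _ = dsum ((1 - eta * lam) ^+ 4) (fun s => gsq s - Ex (normalize (x s))) t).
  2: by apply: eq_bigr => s _; rewrite exprM.
rewrite dsumB ler_norml => /andP[+ _].
have : sig ^+ 2 * dsum ((1 - eta * lam) ^+ 4) (fun=> 1) t
       <= dsum ((1 - eta * lam) ^+ 4) (fun s => Ex (normalize (x s))) t.
  rewrite -dsumZ; apply: ler_dsum => [|s]; first exact: exprn_even_ge0.
  by rewrite mulr1 sqr_sig_le_Ex // l2norm_normalize // sgd_wd_neq0.
lra.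
Qed.

Lemma l2norm4_sgd_wd_ge t : (t <= T)%N ->
  (1 - eta * lam) / (2 * eta * lam)
    * (1 - expR (- (4 * t%:R * eta * lam * (1 - eta * lam)))) * sig ^+ 2
  - 2 * (1 - eta * lam) ^+ 2 * B <= eta ^- 2 * l2norm (x t) ^+ 4.
Proof.
move=> tT; have B0 : 0 <= B := le_trans (normr_ge0 _) (deviation_le (leq0n _)).
have c0 : 0 <= 2 * (1 - eta * lam) ^+ 2 by rewrite mulr_ge0 ?sqr_ge0.
have cB0 := mulr_ge0 c0 B0.
have rhs0 : 0 <= eta ^- 2 * l2norm (x t) ^+ 4.
  by rewrite mulr_ge0 ?invr_ge0 ?sqr_ge0 ?exprn_ge0 ?l2norm_ge0.
case: t tT rhs0 => [_ | s sT] rhs0.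
  have -> : 4 * (0%:R : R) * eta * lam * (1 - eta * lam) = 0 by rewrite mulr0 !mul0r.
  rewrite oppr0 expR0 subrr mulr0 mul0r; lra.
rewrite -(mulrA 2 eta lam) -(mulrA (4 * s.+1%:R) eta lam).
have sT' : (s <= T.-1)%N by case: (T) sT.
have [a0 a1] := (etalam_gt0, etalam_le).
set a := eta * lam in a0 a1 B0 c0 cB0 sT' *; set E := expR _.
set S := dsum ((1 - a) ^+ 4) (fun=> 1) s.
set G := dsum ((1 - a) ^+ 4) (fun s => gsq s) s.
have GS : sig ^+ 2 * S - B <= G := dsum_gsq_ge sT'.
have ES : 1 - E <= 4 * a * (1 - a) * S := dsum_geom_ge s a0 a1.
have Gx : 2 * (1 - a) ^+ 2 * G <= eta ^- 2 * l2norm (x s.+1) ^+ 4.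
  have eta2 : 0 < eta ^+ 2 := exprn_gt0 2 eta_pos.
  rewrite -(ler_pM2l eta2) [X in _ <= X]mulrA mulfV ?gt_eqF // mul1r.
  have -> : eta ^+ 2 * (2 * (1 - a) ^+ 2 * G) = 2 * (1 - a) ^+ 2 * eta ^+ 2 * G by ring.
  exact: l2norm4_sgd_wd_ge_dsum.
have ES' : (1 - a) / (2 * a) * (1 - E) * sig ^+ 2 <= 2 * (1 - a) ^+ 2 * S * sig ^+ 2.
  rewrite ler_wpM2r ?sqr_ge0 //.
  have k0 : 0 <= (1 - a) / (2 * a) by rewrite divr_ge0; lra.
  have -> : 2 * (1 - a) ^+ 2 * S = (1 - a) / (2 * a) * (4 * a * (1 - a) * S).
    by field; rewrite gt_eqF.
  by have := ler_wpM2l k0 ES.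
have := ler_wpM2l c0 GS; lra.
Qed.

Lemma l2norm4_sgd_wd_ge_late t :
  2 * B <= sig ^+ 2 / (12 * eta * lam) -> (eta * lam)^-1 <= t%:R -> (t <= T)%N ->
  (1 - eta * lam) ^+ 2 * sig ^+ 2 / (4 * eta * lam) <= eta ^- 2 * l2norm (x t) ^+ 4.
Proof.
move=> hB ht tT; apply: le_trans (l2norm4_sgd_wd_ge tT).
rewrite -!(mulrA _ eta lam) in hB *.
have [a0 a1] := (etalam_gt0, etalam_le).
set a := eta * lam in a0 a1 hB ht *.
have ta : 1 <= t%:R * a by rewrite -(ler_pM2r a0) mulVf ?gt_eqF in ht.
have hE : expR (- (4 * t%:R * a * (1 - a))) <= 4^-1 by apply: expRN_le_inv4; nra.
set E := expR _ in hE *; set w := sig ^+ 2 / a.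
have w0 : 0 <= w by rewrite divr_ge0 ?sqr_ge0 ?ltW.
have -> : (1 - a) ^+ 2 * sig ^+ 2 / (4 * a) = (1 - a) ^+ 2 * w / 4 by rewrite /w; field; rewrite gt_eqF.
have -> : (1 - a) / (2 * a) * (1 - E) * sig ^+ 2 = (1 - a) * (1 - E) * w / 2.
  by rewrite /w; field; rewrite gt_eqF.
have {hB} hB : 2 * B <= w / 12 by move: hB; rewrite /w; congr (_ <= _); field; rewrite gt_eqF.
have a1pos : 0 < 1 - a by lra.
have := ler_wpM2l (sqr_ge0 (1 - a)) hB.
have E34 : 3 / 4 <= 1 - E by lra.
have := ler_wpM2l (mulr_ge0 (ltW a1pos) w0) E34.
have : (1 - a) ^+ 2 * w <= (1 - a) * w.
  by rewrite expr2 -mulrA ler_piMl ?(mulr_ge0 (ltW a1pos) w0) //; lra.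
nra.
Qed.

End SGDWeightDecayConcentration.
Theorem mainTheorem14 (R : realType) (d : nat)
  (dG : measure_display) (Gam : measurableType dG) (D : probability Gam R)
  (L : Gam -> 'rV[R]_d -> R)
  (L_diff : forall g x, x != 0 -> differentiable (L g) x)
  (L_scale : forall g x (c : R), x != 0 -> 0 < c -> L g (c *: x) = L g x)
  (L_meas : forall x, measurable_fun setT (fun g => l2norm (grad (L g) x) ^+ 2))
  (M_fin : has_ubound (gradnorm_sphere L))
  (sig : R) (sig_pos : 0 < sig)
  (sig_le : forall x, l2norm x = 1 ->
     ((sig ^+ 2)%:E <= \int[D]_g ((l2norm (grad (L g) x) ^+ 2)%:E))%E)
  (eta lam : R) (eta_pos : 0 < eta) (lam_pos : 0 < lam)
  (etalam_le : eta * lam <= 2^-1)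
  (T : nat) (T_ge1 : (1 <= T)%N)
  (delta : R) (delta_pos : 0 < delta) (delta_lt1 : delta < 1)
  (x0 : 'rV[R]_d) (x0_neq0 : x0 != 0)
  (gam : nat -> Gam) :
  let M := sup (gradnorm_sphere L) in
  let Ex := fun y : 'rV[R]_d => fine (\int[D]_g ((l2norm (grad (L g) y) ^+ 2)%:E)) in
  let x := sgd_wd L eta lam gam x0 in
  let lg := ln (2 * (T%:R) ^+ 2 / delta) in
  let ET := forall t' t : nat, (t' <= t)%N -> (t <= T.-1)%N ->
     `| \sum_(t' <= tau < t.+1)
          (1 - eta * lam) ^+ (4 * (t - tau)) *
          (l2norm (grad (L (gam tau)) (normalize (x tau))) ^+ 2 - Ex (normalize (x tau))) |
     <= expR (4 * eta * lam) * (M ^+ 2 / 4) * Num.sqrt ((lam * eta)^-1 * lg) in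
  sig ^+ 2 / M ^+ 2 >= 3 * expR (4 * eta * lam) * Num.sqrt (lam * eta * lg) ->
  ET ->
  (forall t : nat, (t <= T)%N ->
     eta ^- 2 * l2norm (x t) ^+ 4 >=
       (1 - eta * lam) / (2 * eta * lam)
         * (1 - expR (- (4 * t%:R * eta * lam * (1 - eta * lam)))) * sig ^+ 2
       - 2^-1 * (1 - eta * lam) ^+ 2 * M ^+ 2 * expR (4 * eta * lam)
           * Num.sqrt ((lam * eta)^-1 * lg))
  /\
  (sig ^+ 2 / (12 * eta * lam) >=
      M ^+ 2 / 2 * expR (4 * eta * lam) * Num.sqrt ((lam * eta)^-1 * lg) ->
   forall t : nat, (eta * lam)^-1 <= t%:R -> (t <= T)%N ->
     eta ^- 2 * l2norm (x t) ^+ 4 >= (1 - eta * lam) ^+ 2 * sig ^+ 2 / (4 * eta * lam)).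
Proof.
move=> M Ex x lg ET _ hET.
set B := expR (4 * eta * lam) * (M ^+ 2 / 4) * Num.sqrt ((lam * eta)^-1 * lg).
pose dev t (tT : (t <= T.-1)%N) := hET 0%N t (leq0n t) tT.
have early := l2norm4_sgd_wd_ge L_diff L_scale L_meas M_fin sig_le eta_pos lam_pos
  etalam_le x0_neq0 dev.
have late := l2norm4_sgd_wd_ge_late L_diff L_scale L_meas M_fin sig_le eta_pos lam_pos
  etalam_le x0_neq0 dev.
split.
- move=> t tT.
  have -> : 2^-1 * (1 - eta * lam) ^+ 2 * M ^+ 2 * expR (4 * eta * lam)
      * Num.sqrt ((lam * eta)^-1 * lg) = 2 * (1 - eta * lam) ^+ 2 * B by rewrite /B; field.
  exact: early.
- have -> : M ^+ 2 / 2 * expR (4 * eta * lam) * Num.sqrt ((lam * eta)^-1 * lg) = 2 * B.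
    by rewrite /B; field.
  by move=> hB t ht tT; apply: late.
Qed.
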